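(* $\overline{\mathcal M}_2=\mathcal M_2$; that is, every matroid with a real representation as a $2$-modular matrix also has a real representation as a totally $2$-modular matrix.
   Context: An integer matrix $A$ is $\Delta$-modular if the determinant of every $\operatorname{rank}(A)\times\operatorname{rank}(A)$ submatrix has absolute value at most $\Delta$, and totally $\Delta$-modular if the determinant of every square submatrix has absolute value at most $\Delta$. $\mathcal M_\Delta$ (resp. $\overline{\mathcal M}_\Delta$) is the class of matroids isomorphic to the real vector matroid of the columns of some $\Delta$-modular (resp. totally $\Delta$-modular) matrix. *)

From HB Require Import structures.
From mathcomp Require Import all_boot all_order all_algebra.
From mathcomp Require Import Rstruct.
From Stdlib Require Rdefinitions.
Set Implicit Arguments. Unset Strict Implicit. Unset Printing Implicit Defensive.
Import Order.TTheory GRing.Theory Num.Theory.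
Local Open Scope ring_scope.

Definition is_matroid (E : finType) (I : {set E} -> bool) : Prop :=
  [/\ I set0,
      (forall X Y : {set E}, X \subset Y -> I Y -> I X) &
      (forall X Y : {set E}, I X -> I Y -> (#|X| < #|Y|)%N ->
         exists2 y, y \in Y :\: X & I (y |: X))].

Definition realmx (m n : nat) (A : 'M[int]_(m, n)) : 'M[Rdefinitions.R]_(m, n) :=
  map_mx (fun z : int => z%:~R) A.

Definition vec_indep (m n : nat) (A : 'M[int]_(m, n)) (S : {set 'I_n}) : bool :=
  \rank (\matrix_(i < m, j < #|S|) (realmx A) i (enum_val j)) == #|S|.

Definition iso_vec_matroid (E : finType) (I : {set E} -> bool)
  (m n : nat) (A : 'M[int]_(m, n)) : Prop :=
  exists phi : E -> 'I_n, bijective phi /\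
    forall S : {set E}, I S = vec_indep A (phi @: S).

Definition Delta_modular (Delta : nat) (m n : nat) (A : 'M[int]_(m, n)) : Prop :=
  forall (f : 'I_(\rank (realmx A)) -> 'I_m) (g : 'I_(\rank (realmx A)) -> 'I_n),
    injective f -> injective g ->
    `|\det (\matrix_(i, j) A (f i) (g j))| <= Delta%:Z.

Definition totally_Delta_modular (Delta : nat) (m n : nat) (A : 'M[int]_(m, n)) : Prop :=
  forall (k : nat) (f : 'I_k -> 'I_m) (g : 'I_k -> 'I_n),
    injective f -> injective g ->
    `|\det (\matrix_(i, j) A (f i) (g j))| <= Delta%:Z.

Definition in_M (Delta : nat) (E : finType) (I : {set E} -> bool) : Prop :=
  exists (m n : nat) (A : 'M[int]_(m, n)), Delta_modular Delta A /\ iso_vec_matroid I A.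

Definition in_Mbar (Delta : nat) (E : finType) (I : {set E} -> bool) : Prop :=
  exists (m n : nat) (A : 'M[int]_(m, n)),
    totally_Delta_modular Delta A /\ iso_vec_matroid I A.

From Pilot Require Import Defs.
From mathcomp Require Import all_boot all_order all_algebra.
From mathcomp Require Import all_fingroup zify Rstruct.
From Stdlib Require Import Classical.
Set Implicit Arguments. Unset Strict Implicit. Unset Printing Implicit Defensive.
Import Order.TTheory GRing.Theory Num.Theory.
Local Open Scope ring_scope.

(* Let A be 2-modular.  Keep a maximal set of independent rows: this gives a
   full-row-rank matrix A' with the same row space, hence the same vector
   matroid, whose maximal minors are maximal minors of A, so bounded by 2.
   Choose columns g1 whose minor D = det B is nonzero and divides every
   maximal minor of A' (possible because all these minors lie in
   {-2,...,2}: take a minor of absolute value 1 if there is one, and any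
   nonzero minor otherwise).  By Cramer's rule the matrix B^-1 A' is then
   integral; call it the normal form M.  It has the same row space as A',
   contains the identity in columns g1, and every square submatrix of M can
   be completed with identity columns to a maximal minor of M, which equals
   a maximal minor of A' divided by D.  Hence M is totally 2-modular. *)

(* An injection of 'I_k into 'I_(k + l) extends to a permutation: list the
   image of f first, then its complement C in increasing order. *)
Lemma injection_perm_extension k l (f : 'I_k -> 'I_(k + l)) :
  injective f -> exists s : 'S_(k + l), forall j, s (lshift l j) = f j.
Proof.
move=> f_inj.
set C := ~: [set f j | j in [set: 'I_k]].
have card_C : #|C| = l.
  have := cardsC [set f j | j in [set: 'I_k]].
  by rewrite card_imset // cardsT !card_ord -/C; lia.
pose tau u := match split u with
  | inl j => f j | inr c => enum_val (cast_ord (esym card_C) c) end.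
have tau_l j : tau (lshift l j) = f j.
  by rewrite /tau -[lshift l j]/(unsplit (inl j)) unsplitK.
have tau_r c : tau (rshift k c) = enum_val (cast_ord (esym card_C) c).
  by rewrite /tau -[rshift k c]/(unsplit (inr c)) unsplitK.
have tau_r_notin c j : f j != tau (rshift k c).
  rewrite tau_r; apply/eqP => E.
  have := enum_valP (cast_ord (esym card_C) c); rewrite -E inE.
  by rewrite imset_f ?inE.
have tau_inj : injective tau.
  move=> u v; rewrite -(splitK u) -(splitK v).
  case: (split u) => [j|c]; case: (split v) => [j'|c'] /=;
    rewrite -?/(lshift l _) -?/(rshift k _) ?tau_l ?tau_r.
  - by move=> /f_inj ->.
  - by move=> E; have := tau_r_notin c' j; rewrite tau_r E eqxx.
  - by move=> E; have := tau_r_notin c j'; rewrite tau_r E eqxx.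
  - by move=> /enum_val_inj /cast_ord_inj ->.
by exists (perm tau_inj) => j; rewrite permE tau_l.
Qed.

Section DeterminantFacts.
Variable R : comPzRingType.

Lemma det_col_noninj m p n (X : 'M[R]_(m, p)) (f : 'I_n -> 'I_m)
    (h : 'I_n -> 'I_p) :
  ~ injective h -> \det (\matrix_(i, j) X (f i) (h j)) = 0.
Proof.
move=> h_noninj; have: ~~ injectiveb h by apply/negP => /injectiveP.
case/injectivePn => j1 [j2 ne_j12 eq_h].
rewrite -det_tr; apply: (determinant_alternate ne_j12) => i.
by rewrite !mxE eq_h.
Qed.

Lemma adj_mulmx_entry n p (B : 'M[R]_n) (Y : 'M[R]_(n, p)) a c :
  (\adj B *m Y) a c = \det (\matrix_(i, j) if j == a then Y i c else B i j).
Proof.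
rewrite mxE (expand_det_col _ a); apply: eq_bigr => i _.
rewrite !mxE eqxx mulrC; congr (_ * _).
rewrite /cofactor; congr (_ * _); congr (\det _); apply/matrixP => u v.
by rewrite !mxE eq_sym (negPf (neq_lift _ _)).
Qed.

Lemma det_perm_conj n (s : 'S_n) (Q : 'M[R]_n) :
  \det (\matrix_(u, v) Q (s u) (s v)) = \det Q.
Proof.
have -> : \matrix_(u, v) Q (s u) (s v) = row_perm s (col_perm s Q).
  by apply/matrixP => u v; rewrite !mxE.
rewrite row_permE col_permE !det_mulmx !det_perm odd_permV.
by rewrite mulrCA -signr_addb addbb expr0 mulr1.
Qed.

Lemma det_complete_identity r k p (M : 'M[R]_(r, p)) (f : 'I_k -> 'I_r)
    (g : 'I_k -> 'I_p) (g1 : 'I_r -> 'I_p) :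
  injective f -> (forall a b, M a (g1 b) = (a == b)%:R) ->
  \det (\matrix_(i, j) M (f i) (g j)) =
  \det (\matrix_(a, b) M a (if [pick j | f j == b] is Some j then g j
                            else g1 b)).
Proof.
move=> f_inj M_id.
have le_kr : (k <= r)%N.
  by rewrite -[k]card_ord -[r]card_ord; apply: leq_card f_inj.
have [l El] : exists l, r = (k + l)%N by exists (r - k)%N; rewrite subnKC.
subst r.
pose h b := if [pick j | f j == b] is Some j then g j else g1 b.
rewrite -[X in _ = \det X]/(\matrix_(a, b) M a (h b)).
(* Reorder rows and columns as the image of f followed by its complement. *)
have [s s_l] := injection_perm_extension f_inj.
have s_r_notin c j : f j != s (rshift k c).
  by rewrite -s_l (inj_eq perm_inj) eq_lrshift.
have h_im j : h (f j) = g j.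
  rewrite /h; case: pickP => [j' /eqP /f_inj -> //|/(_ j)].
  by rewrite eqxx.
have h_compl c : h (s (rshift k c)) = g1 (s (rshift k c)).
  rewrite /h; case: pickP => [j' /eqP E|//].
  by have := s_r_notin c j'; rewrite E eqxx.
(* In this order the matrix is block lower triangular with identity block. *)
pose Q := \matrix_(u, v) (\matrix_(a, b) M a (h b)) (s u) (s v).
transitivity (\det Q); last exact: det_perm_conj.
rewrite -[Q](@submxK _ k l k l).
have -> : ursubmx Q = 0.
  apply/matrixP => i c; rewrite !mxE s_l h_compl M_id.
  by rewrite (negPf (s_r_notin c i)).
have -> : drsubmx Q = 1%:M.
  apply/matrixP => c c'; rewrite !mxE h_compl M_id.
  by rewrite (inj_eq perm_inj) eq_rshift.
rewrite det_lblock det1 mulr1; congr (\det _).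
by apply/matrixP => i j; rewrite !mxE !s_l h_im.
Qed.

End DeterminantFacts.

Lemma col_select_mulmx (F : fieldType) m n q (X : 'M[F]_(m, n))
    (e : 'I_q -> 'I_n) :
  \matrix_(i, j) X i (e j) = X *m \matrix_(i, j) (i == e j)%:R.
Proof.
apply/matrixP => i j; rewrite !mxE (bigD1 (e j)) //= mxE eqxx mulr1.
by rewrite big1 ?addr0 // => u /negPf; rewrite mxE => ->; rewrite mulr0.
Qed.

Lemma iso_vec_matroid_eqmx (E : finType) (I : {set E} -> bool)
    m1 m2 n (A1 : 'M[int]_(m1, n)) (A2 : 'M[int]_(m2, n)) :
  (Defs.realmx A1 :=: Defs.realmx A2)%MS ->
  iso_vec_matroid I A2 -> iso_vec_matroid I A1.
Proof.
move=> eqA [phi [phi_bij I_phi]]; exists phi; split=> // S.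
by rewrite I_phi /vec_indep !col_select_mulmx (eqmxMr _ eqA).
Qed.

Definition minor r n (A : 'M[int]_(r, n)) (g : 'I_r -> 'I_n) : int :=
  \det (\matrix_(i, j) A i (g j)).

Lemma minor_noninj r n (A : 'M[int]_(r, n)) g : ~ injective g -> minor A g = 0.
Proof. exact: det_col_noninj. Qed.

(* Normalizing A with respect to columns g1 whose minor D is nonzero and
   divides every maximal minor: the normal form is the integral matrix
   B^-1 A, B being the (invertible) submatrix of A on the columns g1. *)
Section NormalForm.
Variables (r n : nat) (A : 'M[int]_(r, n)) (g1 : 'I_r -> 'I_n).

Let B : 'M[int]_r := \matrix_(i, j) A i (g1 j).

(* By Cramer's rule, D * (B^-1 A) a c is the minor of A on columns g1 with
   the a-th one replaced by c. *)
Definition normal_form : 'M[int]_(r, n) :=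
  \matrix_(a, c) (minor A (fun j => if j == a then c else g1 j) %/ minor A g1)%Z.

Hypothesis minor_g1_neq0 : minor A g1 != 0.
Hypothesis minor_g1_dvd : forall g, (minor A g1 %| minor A g)%Z.

Lemma mul_basis_normal_form : B *m normal_form = A.
Proof.
have adjE : \adj B *m A = minor A g1 *: normal_form.
  apply/matrixP => a c; rewrite adj_mulmx_entry !mxE mulrC divzK //.
  by rewrite /minor; congr (\det _); apply/matrixP => i j; rewrite !mxE; case: eqP.
have := congr1 (mulmx B) adjE.
rewrite mulmxA mul_mx_adj mul_scalar_mx -scalemxAr => /matrixP eq_scaled.
apply/matrixP => i j; apply: (mulfI minor_g1_neq0).
by have := eq_scaled i j; rewrite !mxE => <-.
Qed.

Lemma normal_form_basis a b : normal_form a (g1 b) = (a == b)%:R.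
Proof.
rewrite mxE; case: eqP => [<-|/eqP ne_ab].
  have -> : minor A (fun j => if j == a then g1 a else g1 j) = minor A g1.
    by congr (\det _); apply/matrixP => i j; rewrite !mxE; case: eqP => [->|].
  by rewrite divzz minor_g1_neq0.
rewrite minor_noninj ?div0z // => h_inj.
by move: ne_ab; rewrite (h_inj a b) /= ?eqxx // eq_sym; case: eqP.
Qed.

Lemma minor_normal_form h : minor A g1 * minor normal_form h = minor A h.
Proof.
rewrite /minor -det_mulmx; congr (\det _); apply/matrixP => i b.
rewrite mxE -[in RHS]mul_basis_normal_form /B !mxE.
by apply: eq_bigr => j _; rewrite !mxE.
Qed.

(* Every square submatrix of the normal form extends to a maximal minor, so
   the normal form is totally Delta-modular when A is Delta-modular. *)
Lemma normal_form_totally_modular Delta :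
  (forall g, injective g -> `|minor A g| <= Delta%:Z) ->
  totally_Delta_modular Delta normal_form.
Proof.
move=> A_mod k f g f_inj _.
rewrite (det_complete_identity g f_inj normal_form_basis).
pose h b := if [pick j | f j == b] is Some j then g j else g1 b.
rewrite -[X in `|\det X|]/(\matrix_(a, b) normal_form a (h b)).
change (`|minor normal_form h| <= Delta%:Z).
case: (injectiveP h) => [h_inj|/minor_noninj ->]; last by rewrite normr0.
have d_pos : 0 < `|minor A g1| by rewrite normr_gt0.
have := A_mod h h_inj; rewrite -minor_normal_form normrM.
move: d_pos; set x := minor normal_form h; set d := minor A g1; nia.
Qed.

(* Since B is invertible, the normal form has the row space of A. *)
Lemma normal_form_eqmx : (Defs.realmx normal_form :=: Defs.realmx A)%MS.
Proof.
have B_unit : Defs.realmx B \in unitmx.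
  by rewrite unitmxE unitfE /Defs.realmx det_map_mx intr_eq0.
have -> : Defs.realmx A = Defs.realmx B *m Defs.realmx normal_form.
  by rewrite /Defs.realmx -map_mxM mul_basis_normal_form.
by apply/eqmx_sym/eqmxMfull; rewrite row_full_unit.
Qed.

End NormalForm.

Definition row_basis_submx m n (A : 'M[int]_(m, n)) :
    'M[int]_(\rank (Defs.realmx A), n) :=
  \matrix_(i, j) A (maxrankfun (Defs.realmx A) i) j.

Section RowBasis.
Variables (m n : nat) (A : 'M[int]_(m, n)).

Lemma row_basis_submx_eqmx :
  (Defs.realmx (row_basis_submx A) :=: Defs.realmx A)%MS.
Proof.
have -> : Defs.realmx (row_basis_submx A) =
          rowsub (maxrankfun (Defs.realmx A)) (Defs.realmx A).
  by apply/matrixP => i j; rewrite !mxE.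
exact: eq_maxrowsub.
Qed.

(* Having full row rank, the row basis has a nonzero maximal minor. *)
Lemma row_basis_submx_minor_neq0 :
  exists g0, minor (row_basis_submx A) g0 != 0.
Proof.
set A' := row_basis_submx A.
have full_tr : row_full (Defs.realmx A')^T.
  by rewrite /row_full mxrank_tr row_basis_submx_eqmx.
set g0 := fullrankfun full_tr; exists g0; have := fullrowsub_unit full_tr.
have -> : rowsub g0 (Defs.realmx A')^T =
          (Defs.realmx (\matrix_(i, j) A' i (g0 j)))^T.
  by apply/matrixP => i j; rewrite !mxE.
by rewrite unitmxE unitfE det_tr det_map_mx intr_eq0.
Qed.

Lemma row_basis_submx_modular Delta : Delta_modular Delta A ->
  forall g, injective g -> `|minor (row_basis_submx A) g| <= Delta%:Z.
Proof.
move=> A_mod g g_inj; rewrite /minor.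
have -> : \matrix_(i, j) row_basis_submx A i (g j) =
          \matrix_(i, j) A (maxrankfun (Defs.realmx A) i) (g j).
  by apply/matrixP => i j; rewrite !mxE.
exact/A_mod/g_inj/maxrankfun_inj.
Qed.

End RowBasis.

(* When all maximal minors lie in [-2, 2] and one is nonzero, some nonzero
   maximal minor divides all of them: one of absolute value 1 if it exists;
   otherwise every nonzero maximal minor has absolute value 2. *)
Lemma dividing_minor_2 r n (A : 'M[int]_(r, n)) :
  (exists g0, minor A g0 != 0) ->
  (forall g, injective g -> `|minor A g| <= 2) ->
  exists2 g1, minor A g1 != 0 & forall g, (minor A g1 %| minor A g)%Z.
Proof.
move=> [g0 g0_neq0] A_mod.
case: (classic (exists g, `|minor A g|%N = 1%N)) => [[g g_unit]|no_unit].
  exists g => [|g']; first by rewrite -absz_eq0 g_unit.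
  by rewrite dvdzE g_unit dvd1n.
have minor_02 g : `|minor A g|%N = 0%N \/ `|minor A g|%N = 2%N.
  case: (injectiveP g) => [g_inj|/minor_noninj ->]; last by left.
  have := A_mod g g_inj; have ne1 : `|minor A g|%N <> 1%N.
    by move=> E; apply: no_unit; exists g.
  by move: ne1; lia.
exists g0 => // g; rewrite dvdzE.
have [E0|->] := minor_02 g0; first by move: g0_neq0; rewrite -absz_eq0 E0.
by have [->|->] := minor_02 g.
Qed.

Local Close Scope ring_scope.
Unset Implicit Arguments.

Theorem mainTheorem8 (E : finType) (I : {set E} -> bool) :
  is_matroid I -> (in_Mbar 2 I <-> in_M 2 I).
Proof.
move=> _; split.
  case=> m [n [A [A_tmod A_iso]]]; exists m, n, A; split=> //.
  move=> f g f_inj g_inj; exact: (A_tmod _ f g f_inj g_inj).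
case=> m [n [A [A_mod A_iso]]].
set A' := row_basis_submx A.
have [g1 g1_neq0 g1_dvd] :=
  dividing_minor_2 (row_basis_submx_minor_neq0 A) (row_basis_submx_modular A_mod).
exists (\rank (Defs.realmx A)), n, (normal_form A' g1); split.
  apply: (normal_form_totally_modular g1_neq0 g1_dvd).
  exact: row_basis_submx_modular A_mod.
apply: (iso_vec_matroid_eqmx _ A_iso).
exact: eqmx_trans (normal_form_eqmx g1_neq0 g1_dvd) (row_basis_submx_eqmx A).
Qed.
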